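(* For all $c,c'\in\mathbb{Q}$ and all integers $n,m\ge1$, $\partial_n^{(c)}\widehat{\partial}_m^{(c')}=\widehat{\partial}_m^{(c')}\partial_n^{(c)}$.
   Context: Let $\mathfrak{H}=\mathbb{Q}\langle x,y\rangle$, $z=x+y$; products of operators denote composition, $\mathrm{ad}(A)(B)=AB-BA$. $H$ is the $\mathbb{Q}$-linear map with $H(w)=\deg(w)w$ for words $w$. $\partial_1$ is the derivation with $\partial_1(x)=xy$, $\partial_1(y)=-xy$. For $c\in\mathbb{Q}$, $\theta^{(c)}$ is the unique $\mathbb{Q}$-linear map with $\theta^{(c)}(x)=\frac12(xz+zx)$, $\theta^{(c)}(y)=\frac12(yz+zy)$ and $\theta^{(c)}(ww')=\theta^{(c)}(w)w'+w\theta^{(c)}(w')+c\,\partial_1(w)H(w')$; $\widehat{\theta}^{(c)}$ is the unique $\mathbb{Q}$-linear map with the same values on $x,y$ and $\widehat{\theta}^{(c)}(ww')=\widehat{\theta}^{(c)}(w)w'+w\widehat{\theta}^{(c)}(w')+c\,H(w)\partial_1(w')$. For $n\ge1$, $\partial_n^{(c)}=\frac{1}{(n-1)!}\mathrm{ad}(\theta^{(c)})^{n-1}(\partial_1)$ and $\widehat{\partial}_n^{(c)}=\frac{1}{(n-1)!}\mathrm{ad}(\widehat{\theta}^{(c)})^{n-1}(\partial_1)$. *)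

(* The free algebra Q<x,y> is represented by finite formal
   sums (lists of (coefficient, word)); two representations denote the same
   element iff all their coefficients [coef] agree. Words are [seq bool]
   with [false] = x and [true] = y. *)
From HB Require Import structures.
From mathcomp Require Import all_boot all_order all_algebra.
Set Implicit Arguments. Unset Strict Implicit. Unset Printing Implicit Defensive.
Import Order.TTheory GRing.Theory Num.Theory.
Local Open Scope ring_scope.

Definition word := seq bool.
Definition hpoly := seq (rat * word).

Definition coef (s : hpoly) (w : word) : rat := \sum_(p <- s | p.2 == w) p.1.

Definition hadd (s t : hpoly) : hpoly := s ++ t.
Definition hscale (a : rat) (s : hpoly) : hpoly := [seq (a * p.1, p.2) | p <- s].
Definition hopp (s : hpoly) : hpoly := hscale (-1) s.
Definition hmul (s t : hpoly) : hpoly := [seq (p.1 * q.1, p.2 ++ q.2) | p <- s, q <- t].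
Definition hword (w : word) : hpoly := [:: (1, w)].

Definition hx : hpoly := hword [:: false].
Definition hy : hpoly := hword [:: true].
Definition hz : hpoly := hadd hx hy.
Definition hletter (a : bool) : hpoly := hword [:: a].

Definition lin (f : word -> hpoly) (s : hpoly) : hpoly :=
  flatten [seq hscale p.1 (f p.2) | p <- s].

Definition Hw (w : word) : hpoly := [:: ((size w)%:R, w)].
Definition Hop : hpoly -> hpoly := lin Hw.

Definition d1letter (a : bool) : hpoly :=
  if a then [:: (-1, [:: false; true])] else [:: (1, [:: false; true])].
Fixpoint d1w (w : word) : hpoly :=
  match w with
  | [::] => [::]
  | a :: w' => hadd (hmul (d1letter a) (hword w')) (hmul (hletter a) (d1w w'))
  end.
Definition d1 : hpoly -> hpoly := lin d1w.

Definition thetaletter (a : bool) : hpoly :=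
  hscale (1 / 2%:R) (hadd (hmul (hletter a) hz) (hmul hz (hletter a))).

Fixpoint thetaw (c : rat) (w : word) : hpoly :=
  match w with
  | [::] => [::]
  | a :: w' => hadd (hmul (thetaletter a) (hword w'))
                 (hadd (hmul (hletter a) (thetaw c w'))
                       (hscale c (hmul (d1w [:: a]) (Hw w'))))
  end.
Definition theta (c : rat) : hpoly -> hpoly := lin (thetaw c).

Fixpoint thetahatw (c : rat) (w : word) : hpoly :=
  match w with
  | [::] => [::]
  | a :: w' => hadd (hmul (thetaletter a) (hword w'))
                 (hadd (hmul (hletter a) (thetahatw c w'))
                       (hscale c (hmul (Hw [:: a]) (d1w w'))))
  end.
Definition thetahat (c : rat) : hpoly -> hpoly := lin (thetahatw c).

Definition ad (A B : hpoly -> hpoly) : hpoly -> hpoly :=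
  fun s => hadd (A (B s)) (hopp (B (A s))).

Definition dn (c : rat) (n : nat) : hpoly -> hpoly :=
  fun s => hscale ((n.-1)`!%:R)^-1 (iter n.-1 (ad (theta c)) d1 s).
Definition dnhat (c : rat) (n : nat) : hpoly -> hpoly :=
  fun s => hscale ((n.-1)`!%:R)^-1 (iter n.-1 (ad (thetahat c)) d1 s).

From HB Require Import structures.
From mathcomp Require Import all_boot all_order all_algebra.
From mathcomp Require Import ring.
From Stdlib Require Import FunctionalExtensionality.
Set Implicit Arguments. Unset Strict Implicit. Unset Printing Implicit Defensive.
Import Order.TTheory GRing.Theory Num.Theory.
Local Open Scope ring_scope.

(* Q<x,y> is represented faithfully ([rep_inj]) on the space
   [vfun] of rational functions of exponent vectors [a : seq nat]: the empty
   word is the indicator of [:: 0] and left multiplication by a letter acts by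
   an explicit lowering operator [lmul].
   1. Under [rep], partial_1, theta^(c) and hat-theta^(c) become weighted
      lowering operators (lower k f)(a) = sum_i k_i(a) f(a - e_i).  This is
      proved word by word: the commutator of [lower k] with [lmul l] is
      computed by [lower_lmul_comm], and for the kernels [k_d1], [k_theta c],
      [k_thetahat c] it reproduces the Leibniz rules defining the operators.
   2. The kernels of theta and hat-theta are affine: k_i(a) - k_i(a - b)
      depends on [b] only ([shift_invariant]).  So the commutator of such a
      [lower k] with a convolution operator [conv F] is again a convolution
      ([lower_conv_comm]); since partial_1 itself is a convolution, every
      partial_n^(c) and hat-partial_m^(c') is one ([rep_dn], [rep_dnhat]).
   3. Convolution operators commute ([conv_comm]); with faithfulness of [rep]
      this gives the theorem. *)

Fixpoint decr (i : nat) (a : seq nat) : seq nat :=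
  match a with
  | [::] => [::]
  | x :: a' => if i is i'.+1 then x :: decr i' a' else x.-1 :: a'
  end.

Fixpoint vle (b a : seq nat) : bool :=
  match b, a with
  | [::], [::] => true
  | y :: b', x :: a' => (y <= x)%N && vle b' a'
  | _, _ => false
  end.

Fixpoint vsub (a b : seq nat) : seq nat :=
  match a with
  | [::] => [::]
  | x :: a' => (x - head 0%N b)%N :: vsub a' (behead b)
  end.

Fixpoint vinc (b : seq nat) (i : nat) : seq nat :=
  match b with
  | [::] => [::]
  | y :: b' => if i is i'.+1 then y :: vinc b' i' else y.+1 :: b'
  end.

Lemma size_decr i a : size (decr i a) = size a.
Proof. by elim: a i => [|x a IH] [|i] //=; rewrite IH. Qed.

Lemma size_vsub a b : size (vsub a b) = size a.
Proof. by elim: a b => [|x a IH] b //=; rewrite IH. Qed.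

Lemma vle_size b a : vle b a -> size b = size a.
Proof. by elim: b a => [|y b IH] [|x a] //= /andP[_ /IH ->]. Qed.

Lemma vsubC a b b' : vsub (vsub a b) b' = vsub (vsub a b') b.
Proof. by elim: a b b' => [|x a IH] b b' //=; rewrite IH subnAC. Qed.

Lemma leq_sub_add (y y' x : nat) : ((y <= x) && (y' <= x - y))%N = (y + y' <= x)%N.
Proof.
case: (leqP y x) => [le_yx | lt_xy] /=; first by rewrite leq_subRL.
by apply/esym/negbTE; rewrite -ltnNge (leq_trans lt_xy (leq_addr _ _)).
Qed.

(* Subtracting [b] then [b'] is possible exactly when subtracting [b'] then
   [b] is: both say [b + b' <= a]. *)
Lemma vleC a b b' : vle b a && vle b' (vsub a b) = vle b' a && vle b (vsub a b').
Proof.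
elim: a b b' => [|x a IH] [|y b] [|y' b'] //=; try by rewrite andbF.
rewrite andbACA leq_sub_add [in RHS]andbACA leq_sub_add addnC.
by rewrite IH.
Qed.

Lemma vsub0 a n : size a = n -> vsub a (nseq n 0%N) = a.
Proof. by elim: a n => [|x a IH] [|n] //= [/IH ->]; rewrite subn0. Qed.

Lemma vle0 a n : vle (nseq n 0%N) a = (size a == n).
Proof. by elim: a n => [|x a IH] [|n] //=; rewrite IH. Qed.

Lemma vle_vinc_decr a b i : (i < size a)%N ->
  ((0 < nth 0%N a i)%N && vle b (decr i a)) = vle (vinc b i) a.
Proof.
elim: a b i => [|x a IH] b i //= lt_i.
case: b => [|y b].
  case: i lt_i => [|i] /= lt_i; first by rewrite andbF.
  by case: (decr i a); rewrite andbF.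
case: i lt_i => [|i] /= lt_i; first by case: x.
by rewrite -(IH b i lt_i) andbCA.
Qed.

Lemma vle_vinc_vsub a b i : (i < size a)%N ->
  (vle b a && (0 < nth 0%N (vsub a b) i)%N) = vle (vinc b i) a.
Proof.
elim: a b i => [|x a IH] b i //= lt_i.
case: b => [|y b] //=; case: i lt_i => [|i] /= lt_i.
  rewrite subn_gt0; case: (ltnP y x) => [lt_yx | _]; last by rewrite andbF.
  by rewrite (ltnW lt_yx) andbT.
by rewrite -(IH b i lt_i) andbA.
Qed.

Lemma vsub_decr a b i : size b = size a -> vsub (decr i a) b = vsub a (vinc b i).
Proof.
elim: a b i => [|x a IH] [|y b] [|i] //= [eq_size].
  by rewrite -subn1 -subnDA add1n.
by rewrite IH.
Qed.

Lemma decr_vsub a b i : size b = size a -> decr i (vsub a b) = vsub a (vinc b i).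
Proof.
elim: a b i => [|x a IH] [|y b] [|i] //= [eq_size]; first by rewrite subnS.
by rewrite IH.
Qed.

Lemma nth_vsub a b i : nth 0%N (vsub a b) i = (nth 0%N a i - nth 0%N b i)%N.
Proof.
elim: a b i => [|x a IH] b i /=; first by rewrite !nth_nil.
by case: b => [|y b]; case: i => [|i] /=; rewrite ?IH ?nth_nil ?subn0.
Qed.

Lemma vle_nth b a i : vle b a -> (nth 0%N b i <= nth 0%N a i)%N.
Proof.
elim: b a i => [|y b IH] [|x a] i //=; rewrite ?nth_nil //.
by case/andP=> le_yx le_ba; case: i => [|i] //=; apply: IH.
Qed.

Lemma drop_vsub j a b : drop j (vsub a b) = vsub (drop j a) (drop j b).
Proof. by elim: j a b => [|j IH] [|x a] [|y b] //=; rewrite IH. Qed.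

Lemma take_vsub j a b : take j (vsub a b) = vsub (take j a) (take j b).
Proof. by elim: j a b => [|j IH] [|x a] [|y b] //=; rewrite IH. Qed.

Lemma vle_drop j b a : vle b a -> vle (drop j b) (drop j a).
Proof. by elim: j b a => [|j IH] [|y b] [|x a] //= /andP[_ /IH]. Qed.

Lemma vle_take j b a : vle b a -> vle (take j b) (take j a).
Proof. by elim: j b a => [|j IH] [|y b] [|x a] //= /andP[-> /IH]. Qed.

(* Operator calculus on functions from exponent vectors to a commutative ring. *)
Section Operators.
Variable R : comRingType.
Implicit Types (f : seq nat -> R) (k : nat -> seq nat -> R).

Definition lower k f (a : seq nat) : R :=
  \sum_(i <- iota 0 (size a)) (if (0 < nth 0%N a i)%N then k i a * f (decr i a) else 0).

Definition conv (F : nat -> seq (R * seq nat)) f (a : seq nat) : R :=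
  \sum_(q <- F (size a)) (if vle q.2 a then q.1 * f (vsub a q.2) else 0).

Definition opcomm (A B : (seq nat -> R) -> seq nat -> R) f (a : seq nat) : R :=
  A (B f) a - B (A f) a.

(* A kernel has translation-invariant increments [mu] when k_i(a) - k_i(a - b)
   depends on the shift [b] only; this is what keeps convolutions closed
   under commutation with [lower k]. *)
Definition shift_invariant k (mu : nat -> seq nat -> R) : Prop :=
  forall i b a, (i < size a)%N -> vle (vinc b i) a -> k i a - k i (vsub a b) = mu i b.

(* The convolution data of [opcomm (lower k) (conv F)] for such a kernel. *)
Definition conv_step (mu : nat -> seq nat -> R) (F : nat -> seq (R * seq nat)) (s : nat)
    : seq (R * seq nat) :=
  flatten [seq [seq (q.1 * mu i q.2, vinc q.2 i) | i <- iota 0 s] | q <- F s].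

Lemma lower_nil k f : lower k f [::] = 0.
Proof. by rewrite /lower big_nil. Qed.

Lemma lower_cons k f x a : lower k f (x :: a) =
  (if (0 < x)%N then k 0%N (x :: a) * f (x.-1 :: a) else 0) +
  \sum_(i <- iota 0 (size a))
     (if (0 < nth 0%N a i)%N then k i.+1 (x :: a) * f (x :: decr i a) else 0).
Proof. by rewrite /lower /= big_cons (iotaDl 1 0) big_map. Qed.

Lemma lower_lin k (I : Type) (s : seq I) (c : I -> R) (F : I -> seq nat -> R) a :
  lower k (fun b => \sum_(j <- s) c j * F j b) a = \sum_(j <- s) c j * lower k (F j) a.
Proof.
rewrite /lower.
transitivity (\sum_(i <- iota 0 (size a)) \sum_(j <- s)
   (if (0 < nth 0%N a i)%N then k i a * (c j * F j (decr i a)) else 0)).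
  by apply: eq_bigr => i _; case: ifP => _; [rewrite mulr_sumr | rewrite big1].
rewrite exchange_big; apply: eq_bigr => j _; rewrite mulr_sumr; apply: eq_bigr => i _.
by case: ifP => _; [ring | rewrite mulr0].
Qed.

Lemma lower_scale k c f a : lower k (fun b => c * f b) a = c * lower k f a.
Proof.
have := lower_lin k [:: tt] (fun _ => c) (fun _ => f) a.
by rewrite big_seq1 => <-; congr lower; apply: functional_extensionality => b; rewrite big_seq1.
Qed.

Lemma lower_kernelD k1 k2 c f a :
  lower (fun i b => k1 i b + c * k2 i b) f a = lower k1 f a + c * lower k2 f a.
Proof.
rewrite /lower mulr_sumr -big_split /=; apply: eq_bigr => i _.
by case: ifP => _; [ring | rewrite mulr0 addr0].
Qed.

Lemma conv_scale F c f a : conv F (fun b => c * f b) a = c * conv F f a.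
Proof.
rewrite /conv mulr_sumr; apply: eq_bigr => q _.
by case: ifP => _; [ring | rewrite mulr0].
Qed.

(* Convolution operators commute: both composites subtract the two shifts. *)
Lemma conv_comm F1 F2 f a : conv F1 (conv F2 f) a = conv F2 (conv F1 f) a.
Proof.
have expand F F' : conv F (conv F' f) a = \sum_(q <- F (size a)) \sum_(q' <- F' (size a))
    (if vle q.2 a && vle q'.2 (vsub a q.2)
     then q.1 * q'.1 * f (vsub (vsub a q.2) q'.2) else 0).
  rewrite /conv; apply: eq_bigr => q _; rewrite size_vsub.
  case: ifP => _ /=; last by rewrite big1.
  rewrite mulr_sumr; apply: eq_bigr => q' _.
  by case: ifP => _; [ring | rewrite mulr0].
rewrite !expand exchange_big; apply: eq_bigr => q' _; apply: eq_bigr => q _.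
by rewrite vleC vsubC; case: ifP => _ //; ring.
Qed.

Lemma lower_convE k F f a : lower k (conv F f) a =
  \sum_(i <- iota 0 (size a)) \sum_(q <- F (size a))
    (if vle (vinc q.2 i) a then k i a * (q.1 * f (vsub a (vinc q.2 i))) else 0).
Proof.
rewrite /lower /conv big_seq [in RHS]big_seq; apply: eq_bigr => i.
rewrite mem_iota add0n => /andP[_ lt_i]; rewrite size_decr.
case: ifP => pos_i; last by rewrite big1 // => q _; rewrite -vle_vinc_decr // pos_i.
rewrite mulr_sumr; apply: eq_bigr => q _; rewrite -vle_vinc_decr // pos_i /=.
case: ifP => le_q; last by rewrite mulr0.
by rewrite vsub_decr // (vle_size le_q) size_decr.
Qed.

Lemma conv_lowerE k F f a : conv F (lower k f) a =
  \sum_(i <- iota 0 (size a)) \sum_(q <- F (size a))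
    (if vle (vinc q.2 i) a then q.1 * (k i (vsub a q.2) * f (vsub a (vinc q.2 i))) else 0).
Proof.
rewrite exchange_big /conv /lower; apply: eq_bigr => q _; rewrite size_vsub.
rewrite big_seq [in RHS]big_seq.
case: ifP => le_q; last first.
  by rewrite big1 // => i; rewrite mem_iota => /andP[_ lt_i]; rewrite -vle_vinc_vsub // le_q.
rewrite mulr_sumr; apply: eq_bigr => i; rewrite mem_iota add0n => /andP[_ lt_i].
rewrite -vle_vinc_vsub // le_q /=; case: ifP => _; last by rewrite mulr0.
by rewrite decr_vsub // (vle_size le_q).
Qed.

Lemma conv_stepE mu F f a : conv (conv_step mu F) f a =
  \sum_(i <- iota 0 (size a)) \sum_(q <- F (size a))
    (if vle (vinc q.2 i) a then q.1 * mu i q.2 * f (vsub a (vinc q.2 i)) else 0).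
Proof.
rewrite /conv /conv_step big_flatten /= big_map exchange_big /=.
by apply: eq_bigr => q _; rewrite big_map.
Qed.

Lemma lower_conv_comm k mu F f a : shift_invariant k mu ->
  opcomm (lower k) (conv F) f a = conv (conv_step mu F) f a.
Proof.
move=> k_inv; rewrite /opcomm lower_convE conv_lowerE conv_stepE -sumrB.
rewrite big_seq [in RHS]big_seq; apply: eq_bigr => i; rewrite mem_iota add0n => /andP[_ lt_i].
rewrite -sumrB; apply: eq_bigr => q _; case: ifP => le_q; last by rewrite subrr.
rewrite -(k_inv i q.2 a lt_i le_q); ring.
Qed.

Lemma iter_lower_conv_comm k mu F0 n f : shift_invariant k mu ->
  iter n (opcomm (lower k)) (conv F0) f = conv (iter n (conv_step mu) F0) f.
Proof.
move=> k_inv; elim: n f => [|n IH] f //=; apply: functional_extensionality => a.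
by rewrite /opcomm !IH -(lower_conv_comm _ _ _ k_inv).
Qed.

End Operators.

Definition vfun := seq nat -> rat.

(* Left multiplication by x: strip the leading zero entries, then lower the
   first nonzero one. *)
Fixpoint lmul_x (f : vfun) (a : seq nat) : rat :=
  match a with
  | [::] => 0
  | 0%N :: a' => lmul_x f a'
  | m.+1 :: b => f (m :: b)
  end.

(* Left multiplication by y: only vectors with a leading zero contribute. *)
Definition lmul_y (f : vfun) (a : seq nat) : rat :=
  if a is 0%N :: a' then - lmul_x f a' else 0.

Definition lmul (l : bool) : vfun -> vfun := if l then lmul_y else lmul_x.

Definition lmul_z (f : vfun) (a : seq nat) : rat :=
  if a is m.+1 :: b then f (m :: b) else 0.

Fixpoint rep_word (w : word) : vfun :=
  if w is l :: w' then lmul l (rep_word w') else fun a => (a == [:: 0%N])%:R.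

Definition rep (s : hpoly) : vfun := fun a => \sum_(q <- s) q.1 * rep_word q.2 a.

Fixpoint lmul_word (w : word) (f : vfun) : vfun :=
  if w is l :: w' then lmul l (lmul_word w' f) else f.

Lemma lmul_zE f : lmul_z f = fun a => lmul_x f a + lmul_y f a.
Proof.
by apply: functional_extensionality => -[|[|x] a] /=; rewrite ?addr0 ?subrr.
Qed.

Lemma lmul_lin l (I : Type) (s : seq I) (c : I -> rat) (F : I -> vfun) a :
  lmul l (fun b => \sum_(j <- s) c j * F j b) a = \sum_(j <- s) c j * lmul l (F j) a.
Proof.
have lmul_x_lin b : lmul_x (fun b => \sum_(j <- s) c j * F j b) b
                    = \sum_(j <- s) c j * lmul_x (F j) b.
  by elim: b => [|[|x] b IH] //=; rewrite big1 // => j _; rewrite mulr0.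
case: l => /=; last exact: lmul_x_lin.
case: a => [|[|x] a] /=; try by rewrite big1 // => j _; rewrite mulr0.
by rewrite lmul_x_lin -sumrN; apply: eq_bigr => j _; rewrite mulrN.
Qed.

Lemma lmul_scale l (c : rat) (f : vfun) : lmul l (fun b => c * f b) = fun b => c * lmul l f b.
Proof.
apply: functional_extensionality => a.
have := lmul_lin l [:: tt] (fun _ => c) (fun _ => f) a.
by rewrite big_seq1 => <-; congr lmul; apply: functional_extensionality => b; rewrite big_seq1.
Qed.

Lemma lmul_add l (f g : vfun) a : lmul l (fun b => f b + g b) a = lmul l f a + lmul l g a.
Proof.
have := lmul_lin l [:: true; false] (fun _ => 1) (fun j => if j then f else g) a.
rewrite !big_cons !big_nil !mul1r !addr0 => <-; congr lmul.
by apply: functional_extensionality => b; rewrite !big_cons !big_nil !mul1r addr0.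
Qed.

Lemma lmul_word_lin w (I : Type) (s : seq I) (c : I -> rat) (F : I -> vfun) a :
  lmul_word w (fun b => \sum_(j <- s) c j * F j b) a
  = \sum_(j <- s) c j * lmul_word w (F j) a.
Proof.
elim: w a => //= l w IH a.
have -> : lmul_word w (fun b => \sum_(j <- s) c j * F j b)
          = fun b => \sum_(j <- s) c j * lmul_word w (F j) b.
  by apply: functional_extensionality => b; rewrite IH.
exact: lmul_lin.
Qed.

Lemma rep_word_cat u v : rep_word (u ++ v) = lmul_word u (rep_word v).
Proof. by elim: u => //= l u ->. Qed.

Lemma rep_hadd s t : rep (hadd s t) = fun a => rep s a + rep t a.
Proof. by apply: functional_extensionality => a; rewrite /rep big_cat. Qed.

Lemma rep_hscale k s : rep (hscale k s) = fun a => k * rep s a.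
Proof.
apply: functional_extensionality => a.
by rewrite /rep /hscale big_map mulr_sumr; apply: eq_bigr => q _ /=; rewrite mulrA.
Qed.

Lemma rep_hword w : rep (hword w) = rep_word w.
Proof. by apply: functional_extensionality => a; rewrite /rep big_seq1 mul1r. Qed.

Lemma rep_Hw w : rep (Hw w) = fun a => (size w)%:R * rep_word w a.
Proof. by apply: functional_extensionality => a; rewrite /rep big_seq1. Qed.

Lemma rep_hmul p q : rep (hmul p q) = fun a => \sum_(u <- p) u.1 * lmul_word u.2 (rep q) a.
Proof.
apply: functional_extensionality => a.
rewrite /rep /hmul big_allpairs_dep; apply: eq_bigr => u _.
rewrite lmul_word_lin mulr_sumr; apply: eq_bigr => v _ /=.
by rewrite rep_word_cat mulrA.
Qed.

Lemma rep_hletter l q : rep (hmul (hletter l) q) = lmul l (rep q).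
Proof.
by rewrite rep_hmul; apply: functional_extensionality => a; rewrite /hletter big_seq1 mul1r.
Qed.

Lemma rep_lin F s : rep (lin F s) = fun a => \sum_(q <- s) q.1 * rep (F q.2) a.
Proof.
apply: functional_extensionality => a.
rewrite /rep /lin big_flatten big_map /=; apply: eq_bigr => q _.
by rewrite /hscale big_map mulr_sumr; apply: eq_bigr => u _ /=; rewrite mulrA.
Qed.

(* The exponent vector detecting the word [w]: reading a word letter by
   letter, x raises the first entry and y prepends a new zero entry. *)
Fixpoint word_point (w : word) : seq nat :=
  match w with
  | [::] => [:: 0%N]
  | l :: w' => let g := word_point w' in
     if l then 0%N :: (head 0%N g).+1 :: behead g else (head 0%N g).+1 :: behead g
  end.

Definition lquot (l : bool) (p : hpoly) : hpoly :=
  [seq (q.1, behead q.2) | q <- p & (q.2 != [::]) && (head false q.2 == l)].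

Lemma coef_lquot l p w : coef (lquot l p) w = coef p (l :: w).
Proof.
rewrite /coef /lquot big_map big_filter_cond /=; apply: eq_bigl => q.
by case: q => c [|l' u] //=; rewrite eqseq_cons.
Qed.

Lemma rep_point_nil p : rep p [:: 0%N] = coef p [::].
Proof.
rewrite /rep /coef [in RHS]big_mkcond; apply: eq_bigr => q _.
by case: q => c [|[] u] /=; rewrite ?mulr1 ?mulr0.
Qed.

Lemma word_point_head w : word_point w = head 0%N (word_point w) :: behead (word_point w).
Proof. by case: w => [|[] w]. Qed.

Lemma rep_lquot l p a : rep (lquot l p) a =
  \sum_(q <- p) (if (q.2 != [::]) && (head false q.2 == l)
                 then q.1 * rep_word (behead q.2) a else 0).
Proof. by rewrite /rep /lquot big_map big_filter big_mkcond. Qed.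

Lemma rep_point_x p w : rep p (word_point (false :: w)) = rep (lquot false p) (word_point w).
Proof.
rewrite rep_lquot /rep; apply: eq_bigr => q _.
by case: q => c [|[] u] /=; rewrite ?mulr0 // -word_point_head.
Qed.

Lemma rep_point_y p w : rep p (word_point (true :: w)) =
  rep (lquot false p) (word_point w) - rep (lquot true p) (word_point w).
Proof.
rewrite !rep_lquot /rep -sumrB; apply: eq_bigr => q _.
by case: q => c [|[] u] /=; rewrite ?mulr0 ?subr0 ?sub0r ?mulrN // -word_point_head.
Qed.

(* [rep] is faithful: its values at the points [word_point u] determine all
   coefficients, by induction on the word. *)
Lemma rep_inj p q : (forall a, rep p a = rep q a) -> coef p =1 coef q.
Proof.
move=> eq_pq w; have {}eq_pq u : rep p (word_point u) = rep q (word_point u) by [].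
elim: w p q eq_pq => [|l w IH] p q eq_pq; first by rewrite -!rep_point_nil (eq_pq [::]).
rewrite -!coef_lquot; apply: IH => u.
have eq_x : rep (lquot false p) (word_point u) = rep (lquot false q) (word_point u).
  by rewrite -!rep_point_x.
case: l => //; move: (eq_pq (true :: u)).
by rewrite !rep_point_y eq_x => /addrI /oppr_inj.
Qed.

Definition letter_sign (l : bool) : rat := if l then -1 else 1.

Lemma lmul_lead0 l g a : lmul l g (0%N :: a) = letter_sign l * lmul_x g a.
Proof. by case: l => /=; rewrite ?mulN1r ?mul1r. Qed.

Definition kernel_shift (k : nat -> seq nat -> rat) (B : rat) : Prop :=
  forall i a, k i.+1 (0%N :: a) = k i a - (i == 0%N)%:R * B.

Lemma lower_lead0 k B f a : kernel_shift k B ->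
  lower k f (0%N :: a) =
  lower k (fun b => f (0%N :: b)) a - B * lmul_z (fun b => f (0%N :: b)) a.
Proof.
move=> k_shift; rewrite lower_cons /= add0r.
case: a => [|x a]; first by rewrite /lower /= !big_nil mulr0 subr0.
rewrite lower_cons /= big_cons (iotaDl 1 0) big_map /= k_shift /=.
under eq_bigr => i _ do rewrite k_shift /= mul0r subr0.
by case: x => [|x] /=; [rewrite mulr0 subr0 | ring].
Qed.

Lemma lower_lmul_pos k l f m b :
  opcomm (lower k) (lmul l) f (m.+1 :: b) =
  if l then k 0%N (m.+1 :: b) * lmul_y f (m :: b)
  else k 0%N (m.+1 :: b) * lmul_x f (m :: b)
       - (if (0 < m)%N then k 0%N (m :: b) * f (m.-1 :: b) else 0)
       + \sum_(i <- iota 0 (size b)) (if (0 < nth 0%N b i)%N then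
            (k i.+1 (m.+1 :: b) - k i.+1 (m :: b)) * f (m :: decr i b) else 0).
Proof.
rewrite /opcomm lower_cons /=; case: l => /=.
  rewrite big1 => [|i _]; last by case: ifP => _; rewrite ?mulr0.
  by rewrite addr0 subr0.
rewrite lower_cons.
have -> : \sum_(i <- iota 0 (size b)) (if (0 < nth 0%N b i)%N then
            (k i.+1 (m.+1 :: b) - k i.+1 (m :: b)) * f (m :: decr i b) else 0) =
  \sum_(i <- iota 0 (size b))
     (if (0 < nth 0%N b i)%N then k i.+1 (m.+1 :: b) * f (m :: decr i b) else 0)
  - \sum_(i <- iota 0 (size b))
     (if (0 < nth 0%N b i)%N then k i.+1 (m :: b) * f (m :: decr i b) else 0).
  by rewrite -sumrB; apply: eq_bigr => i _; case: ifP => _; [ring | rewrite subrr].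
by case: m => [|m] /=; ring.
Qed.

(* General form of the commutator of [lower k] with left multiplication: by
   induction on the number of leading zeros, it is determined by its values
   at vectors with positive leading entry. *)
Lemma lower_lmul_comm k B (Rc : bool -> vfun -> vfun) : kernel_shift k B ->
  (forall l f, Rc l f [::] = 0) ->
  (forall l f a, Rc l f (0%N :: a) =
     letter_sign l * (Rc false f a - B * lmul_z (lmul_x f) a)) ->
  (forall l f m b, opcomm (lower k) (lmul l) f (m.+1 :: b) = Rc l f (m.+1 :: b)) ->
  forall l f a, opcomm (lower k) (lmul l) f a = Rc l f a.
Proof.
move=> k_shift Rc_nil Rc_lead0 Rc_pos l f a; rewrite /opcomm.
elim: a l => [|x a IH] l; first by rewrite lower_nil Rc_nil; case: l => /=; rewrite subrr.
case: x => [|m]; last exact: Rc_pos.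
rewrite (lower_lead0 _ _ k_shift) lmul_lead0 Rc_lead0 -(IH false) /=.
have -> : (fun b => lmul l f (0%N :: b)) = (fun b => letter_sign l * lmul_x f b).
  by apply: functional_extensionality => b; rewrite lmul_lead0.
rewrite lower_scale.
have -> : lmul_z (fun b => letter_sign l * lmul_x f b) a = letter_sign l * lmul_z (lmul_x f) a.
  by case: a {IH} => [|[|y] a] /=; rewrite ?mulr0.
ring.
Qed.

(* The four kernels realizing partial_1, the symmetric part
   a |-> (az + za)/2 of theta^(c) and hat-theta^(c), and their two
   c-corrections (see [rep_d1w], [rep_thetaw], [rep_thetahatw]). *)
Definition k_d1 (i : nat) (a : seq nat) : rat := - (i.+1 < size a)%N%:R.
Definition k_sym (i : nat) (a : seq nat) : rat :=
  (nth 0%N a i)%:R - 1 + (i == 0%N)%:R / 2%:R - (i.+1 == size a)%:R / 2%:R.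
Definition k_corr (i : nat) (a : seq nat) : rat :=
  (i.+1 < size a)%N%:R * (1 - (sumn (drop i.+1 a))%:R).
Definition k_corrhat (i : nat) (a : seq nat) : rat :=
  - ((i.+1 < size a)%N%:R * ((sumn (take i a))%:R + (nth 0%N a i)%:R - 1)).

(* The operator H (degree) on the representation side. *)
Definition hdeg (f : vfun) : vfun := fun a => (sumn a)%:R * f a.

(* Multiplying by x raises the weight of the support by one. *)
Lemma lmul_x_hdeg f b : lmul_x (hdeg f) b = ((sumn b)%:R - 1) * lmul_x f b.
Proof.
elim: b => [|[|x] b IH] /=; rewrite ?mulr0 ?add0n //.
rewrite /hdeg /= !natrD; ring.
Qed.

(* Leibniz rule: [partial_1, l] = partial_1(l), with partial_1(x) = xy and
   partial_1(y) = -xy. *)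
Lemma lower_d1_lmul l f a :
  opcomm (lower k_d1) (lmul l) f a = letter_sign l * lmul_x (lmul_y f) a.
Proof.
apply: (@lower_lmul_comm k_d1 0 (fun l f a => letter_sign l * lmul_x (lmul_y f) a))
  => {l f a} [i a|l f|l f a|l f m b].
- by rewrite /k_d1 /= mulr0 subr0.
- by rewrite mulr0.
- by case: l => /=; ring.
rewrite lower_lmul_pos big1 => [|i _]; last first.
  by case: ifP => _ //; rewrite /k_d1 /= subrr mul0r.
rewrite /k_d1 /=; case: l => /=; case: m => [|m] /=;
  (have [->|b_nil] := eqVneq b [::];
   [by rewrite /=; ring | rewrite ?ltnS ?lt0n ?size_eq0 ?b_nil /=; ring]).
Qed.

(* The symmetric part of theta: [theta_sym, l] = (lz + zl)/2. *)
Lemma lower_sym_lmul l f a : opcomm (lower k_sym) (lmul l) f a =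
  (lmul l (lmul_z f) a + lmul_z (lmul l f) a) / 2%:R.
Proof.
apply: (@lower_lmul_comm k_sym (1 / 2%:R)
  (fun l f a => (lmul l (lmul_z f) a + lmul_z (lmul l f) a) / 2%:R))
  => {l f a} [i a|l f|l f a|l f m b].
- by rewrite /k_sym /=; case: i => [|i] /=; field.
- by case: l => /=; rewrite addr0 mul0r.
- by rewrite lmul_lead0 /=; case: l => /=; field.
rewrite lower_lmul_pos big1 => [|i _]; last first.
  by case: ifP => _ //; rewrite /k_sym /= subrr mul0r.
by rewrite /k_sym /=; case: l => /=; case: m => [|m] /=; case: b => [|x b] /=; field.
Qed.

(* The correction of theta: [theta_corr, l] = partial_1(l) H. *)
Lemma lower_corr_lmul l f a :
  opcomm (lower k_corr) (lmul l) f a = letter_sign l * lmul_x (lmul_y (hdeg f)) a.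
Proof.
apply: (@lower_lmul_comm k_corr 0
  (fun l f a => letter_sign l * lmul_x (lmul_y (hdeg f)) a))
  => {l f a} [i a|l f|l f a|l f m b].
- by rewrite /k_corr /= mulr0 subr0.
- by rewrite mulr0.
- by case: l => /=; ring.
rewrite lower_lmul_pos big1 => [|i _]; last first.
  by case: ifP => _ //; rewrite /k_corr /= subrr mul0r.
rewrite /k_corr /=; case: l => /=; case: m => [|m] /=; rewrite ?lmul_x_hdeg;
  (have [->|b_nil] := eqVneq b [::];
   [by rewrite /=; ring | rewrite ?ltnS ?drop0 ?lt0n ?size_eq0 ?b_nil /=; ring]).
Qed.

(* The correction of hat-theta: [theta_corrhat, l] = l partial_1. *)
Lemma lower_corrhat_lmul l f a :
  opcomm (lower k_corrhat) (lmul l) f a = lmul l (lower k_d1 f) a.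
Proof.
apply: (@lower_lmul_comm k_corrhat 0 (fun l f a => lmul l (lower k_d1 f) a))
  => {l f a} [i a|l f|l f a|l f m b].
- by rewrite /k_corrhat /= add0n mulr0 subr0.
- by case: l.
- by rewrite lmul_lead0 /=; case: l => /=; ring.
rewrite lower_lmul_pos.
have incr i : k_corrhat i.+1 (m.+1 :: b) - k_corrhat i.+1 (m :: b) = k_d1 i.+1 (m :: b).
  by rewrite /k_corrhat /k_d1 /= !natrD; ring.
under eq_bigr => i _ do rewrite incr.
clear incr.
case: l => /=; first by case: m => [|m] /=; rewrite /k_corrhat /= ?mul0r //; ring.
by rewrite lower_cons; case: m => [|m] /=; rewrite /k_corrhat /k_d1 /=; ring.
Qed.

Lemma opcomm_lower_kernelD k1 k2 c l f a :
  opcomm (lower (fun i b => k1 i b + c * k2 i b)) (lmul l) f a =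
  opcomm (lower k1) (lmul l) f a + c * opcomm (lower k2) (lmul l) f a.
Proof.
rewrite /opcomm !lower_kernelD.
have -> : lower (fun i b => k1 i b + c * k2 i b) f =
          fun b => lower k1 f b + (fun b => c * lower k2 f b) b.
  by apply: functional_extensionality => b; rewrite lower_kernelD.
rewrite lmul_add lmul_scale; ring.
Qed.

Definition k_theta (c : rat) (i : nat) (a : seq nat) : rat := k_sym i a + c * k_corr i a.
Definition k_thetahat (c : rat) (i : nat) (a : seq nat) : rat := k_sym i a + c * k_corrhat i a.

Lemma lower_theta_lmul c l f a : opcomm (lower (k_theta c)) (lmul l) f a =
  (lmul l (lmul_z f) a + lmul_z (lmul l f) a) / 2%:R
  + c * (letter_sign l * lmul_x (lmul_y (hdeg f)) a).
Proof. by rewrite opcomm_lower_kernelD lower_sym_lmul lower_corr_lmul. Qed.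

Lemma lower_thetahat_lmul c l f a : opcomm (lower (k_thetahat c)) (lmul l) f a =
  (lmul l (lmul_z f) a + lmul_z (lmul l f) a) / 2%:R + c * lmul l (lower k_d1 f) a.
Proof. by rewrite opcomm_lower_kernelD lower_sym_lmul lower_corrhat_lmul. Qed.

Lemma lower_rep_nil k a : k 0%N [:: 1%N] = 0 -> lower k (rep_word [::]) a = 0.
Proof.
move=> k_1; case: a => [|x [|y a]]; first exact: lower_nil.
  by rewrite lower_cons /= big_nil addr0; case: x => [|[|x]] /=; rewrite ?k_1 ?mul0r ?mulr0.
rewrite lower_cons big1 => [|i _].
  by case: ifP => _ /=; rewrite ?eqseq_cons ?andbF ?mulr0 ?addr0.
case: ifP => _ //=; rewrite eqseq_cons.
by move: (size_decr i (y :: a)); case: (decr i (y :: a)) => [|z t] //= _; rewrite andbF mulr0.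
Qed.

(* The image of a word of length n is supported on vectors of weight n. *)
Lemma rep_word_homog w a : (sumn a)%:R * rep_word w a = (size w)%:R * rep_word w a.
Proof.
have lmul_x_homog (g : vfun) (s : nat) :
    (forall a, (sumn a)%:R * g a = s%:R * g a) ->
    forall a, (sumn a)%:R * lmul_x g a = s.+1%:R * lmul_x g a.
  move=> g_homog; elim=> [|[|x] b IH] /=; rewrite ?mulr0 ?add0n //.
  have /= g_xb := g_homog (x :: b).
  by rewrite addSn !mulrSr mulrDl g_xb; ring.
elim: w a => [|l w IH] a /=; first by case: eqP => [->|_]; rewrite ?mulr0 ?mul0r.
case: l => /=; last exact: lmul_x_homog.
case: a => [|[|x] a] //=; rewrite ?mulr0 // !mulrN; congr (- _); exact: lmul_x_homog.
Qed.

Lemma hdeg_rep_word w : hdeg (rep_word w) = fun a => (size w)%:R * rep_word w a.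
Proof. by apply: functional_extensionality => a; apply: rep_word_homog. Qed.

Lemma rep_d1letter_mul l q :
  rep (hmul (d1w [:: l]) q) = fun a => letter_sign l * lmul_x (lmul_y (rep q)) a.
Proof.
rewrite rep_hmul; apply: functional_extensionality => a.
by case: l; rewrite /= !big_cons big_nil /= ?mul1r ?addr0.
Qed.

Lemma rep_thetaletter_mul l q : rep (hmul (thetaletter l) q) =
  fun a => (lmul l (lmul_z (rep q)) a + lmul_z (lmul l (rep q)) a) / 2%:R.
Proof.
rewrite rep_hmul; apply: functional_extensionality => a.
rewrite !lmul_zE lmul_add.
by case: l; rewrite /= !big_cons big_nil /=; field.
Qed.

Lemma rep_d1w w : rep (d1w w) = lower k_d1 (rep_word w).
Proof.
elim: w => [|l w IH].
  by apply: functional_extensionality => a; rewrite lower_rep_nil // /rep big_nil.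
apply: functional_extensionality => a.
rewrite /= rep_hadd rep_hletter IH !rep_hmul rep_hword /=.
move: (lower_d1_lmul l (rep_word w) a); rewrite /opcomm => /eqP; rewrite subr_eq => /eqP ->.
by case: l; rewrite /= big_seq1 /=; ring.
Qed.

(* Under [rep], theta^(c) on words is the lowering operator with kernel
   [k_theta c]: both satisfy the same recursion over the first letter. *)
Lemma rep_thetaw c w : rep (thetaw c w) = lower (k_theta c) (rep_word w).
Proof.
apply: functional_extensionality => a; elim: w a => [|l w IH] a.
  by rewrite lower_rep_nil /rep ?big_nil // /k_theta /k_sym /k_corr /=; field.
have {}IH := functional_extensionality _ _ IH.
have -> : thetaw c (l :: w) = hadd (hmul (thetaletter l) (hword w))
    (hadd (hmul (hletter l) (thetaw c w)) (hscale c (hmul (d1w [:: l]) (Hw w)))) by [].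
rewrite 2!rep_hadd rep_hscale rep_thetaletter_mul rep_hletter IH.
rewrite rep_d1letter_mul rep_Hw rep_hword -hdeg_rep_word /=.
move: (lower_theta_lmul c l (rep_word w) a); rewrite /opcomm => /eqP.
by rewrite subr_eq => /eqP ->; ring.
Qed.

Lemma rep_thetahatw c w : rep (thetahatw c w) = lower (k_thetahat c) (rep_word w).
Proof.
apply: functional_extensionality => a; elim: w a => [|l w IH] a.
  by rewrite lower_rep_nil /rep ?big_nil // /k_thetahat /k_sym /k_corrhat /=; field.
have {}IH := functional_extensionality _ _ IH.
have -> : thetahatw c (l :: w) = hadd (hmul (thetaletter l) (hword w))
    (hadd (hmul (hletter l) (thetahatw c w)) (hscale c (hmul (Hw [:: l]) (d1w w)))) by [].
rewrite 2!rep_hadd rep_hscale rep_thetaletter_mul rep_hletter IH.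
rewrite rep_hmul rep_d1w rep_hword /= big_seq1 /= mul1r.
move: (lower_thetahat_lmul c l (rep_word w) a); rewrite /opcomm => /eqP.
by rewrite subr_eq => /eqP ->; ring.
Qed.

Lemma rep_lin_lower F k : (forall w, rep (F w) = lower k (rep_word w)) ->
  forall s, rep (lin F s) = lower k (rep s).
Proof.
move=> F_lower s; rewrite rep_lin; apply: functional_extensionality => a.
under eq_bigr => q _ do rewrite F_lower.
by rewrite -lower_lin.
Qed.

Lemma rep_iter_ad (T : hpoly -> hpoly) (Tr : vfun -> vfun) n :
  (forall s, rep (T s) = Tr (rep s)) ->
  forall s, rep (iter n (ad T) d1 s) = iter n (opcomm Tr) (lower k_d1) (rep s).
Proof.
move=> T_Tr; elim: n => [|n IH] s /=; first exact: rep_lin_lower rep_d1w s.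
rewrite /ad rep_hadd /hopp rep_hscale; apply: functional_extensionality => a.
by rewrite T_Tr !IH T_Tr /opcomm mulN1r.
Qed.

(* partial_1 is itself a convolution operator: it shifts one unit. *)
Definition d1_conv (s : nat) : seq (rat * seq nat) :=
  [seq (- (j.+1 < s)%N%:R, vinc (nseq s 0%N) j) | j <- iota 0 s].

Lemma lower_d1_conv : lower k_d1 = conv d1_conv.
Proof.
apply: functional_extensionality => f; apply: functional_extensionality => a.
rewrite /lower /conv /d1_conv big_map big_seq [in RHS]big_seq; apply: eq_bigr => j.
rewrite mem_iota add0n => /andP[_ lt_j] /=.
rewrite -vle_vinc_decr // vle0 size_decr eqxx andbT.
by case: ifP => _ //; rewrite -vsub_decr ?size_nseq // vsub0 ?size_decr.
Qed.

Definition incr_theta (c : rat) (i : nat) (b : seq nat) : rat :=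
  (nth 0%N b i)%:R - c * (i.+1 < size b)%N%:R * (sumn (drop i.+1 b))%:R.
Definition incr_thetahat (c : rat) (i : nat) (b : seq nat) : rat :=
  (nth 0%N b i)%:R - c * (i.+1 < size b)%N%:R * ((sumn (take i b))%:R + (nth 0%N b i)%:R).

Lemma sumn_vsub b a : vle b a -> (sumn (vsub a b))%:R = (sumn a)%:R - (sumn b)%:R :> rat.
Proof.
elim: b a => [|y b IH] [|x a] //= /andP[le_yx le_ba].
by rewrite !natrD natrB // IH //; ring.
Qed.

Lemma k_theta_shift_invariant c : shift_invariant (k_theta c) (incr_theta c).
Proof.
move=> i b a lt_i; rewrite -vle_vinc_vsub // => /andP[le_ba _].
rewrite /k_theta /k_sym /k_corr /incr_theta size_vsub nth_vsub drop_vsub.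
by rewrite sumn_vsub ?vle_drop // natrB ?vle_nth // (vle_size le_ba); ring.
Qed.

Lemma k_thetahat_shift_invariant c : shift_invariant (k_thetahat c) (incr_thetahat c).
Proof.
move=> i b a lt_i; rewrite -vle_vinc_vsub // => /andP[le_ba _].
rewrite /k_thetahat /k_sym /k_corrhat /incr_thetahat size_vsub nth_vsub take_vsub.
by rewrite sumn_vsub ?vle_take // natrB ?vle_nth // (vle_size le_ba); ring.
Qed.

Lemma rep_dn c n s : rep (dn c n s) = fun a =>
  ((n.-1)`!%:R)^-1 * conv (iter n.-1 (conv_step (incr_theta c)) d1_conv) (rep s) a.
Proof.
rewrite /dn rep_hscale (rep_iter_ad _ (rep_lin_lower (rep_thetaw c))) lower_d1_conv.
by rewrite (iter_lower_conv_comm _ _ _ (k_theta_shift_invariant c)).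
Qed.

Lemma rep_dnhat c n s : rep (dnhat c n s) = fun a =>
  ((n.-1)`!%:R)^-1 * conv (iter n.-1 (conv_step (incr_thetahat c)) d1_conv) (rep s) a.
Proof.
rewrite /dnhat rep_hscale (rep_iter_ad _ (rep_lin_lower (rep_thetahatw c))) lower_d1_conv.
by rewrite (iter_lower_conv_comm _ _ _ (k_thetahat_shift_invariant c)).
Qed.

Unset Implicit Arguments.

(* Both composites are represented by the same product of commuting
   convolution operators, and [rep] is faithful. *)
Theorem mainTheorem18 (c c' : rat) (n m : nat) (hn : (1 <= n)%N) (hm : (1 <= m)%N)
  (f : hpoly) :
  coef (dn c n (dnhat c' m f)) =1 coef (dnhat c' m (dn c n f)).
Proof.
apply: rep_inj => a.
rewrite rep_dn rep_dnhat rep_dnhat rep_dn !conv_scale conv_comm; ring.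
Qed.
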